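(* Let $p_0,q_0>0$ and $\Delta(p_0,q_0)=\{(p,q):\ p\ge p_0,\ q\ge q_0,\ q_0/p_0\ge q/p\}$. Let $A,B$ be compact operators on a complex separable Hilbert space $H$ such that $A\gtrless B$ and $\|A\|_{p_0,q_0}\ge\|B\|_{p_0,q_0}$ (resp. $>$). Then for every $(p,q)\in\Delta(p_0,q_0)$, $\|A\|_{p,q}\ge\|B\|_{p,q}$ (resp. $>$). Conversely, if $(p,q)\notin\Delta(p_0,q_0)$ (with $p,q>0$), there exist operators $A,B$ of rank at most two such that $A\gtrless B$, $\|A\|_{p_0,q_0}>\|B\|_{p_0,q_0}$ and $\|A\|_{p,q}<\|B\|_{p,q}$.
   Context: For a compact operator $A$ on $H$, $s(A)=(s_n(A))_{n\ge1}$ is its sequence of singular numbers in nonincreasing order. For $p,q>0$, $\|A\|_{p,q}=\|s(A)\|_{\ell(p,q)}$, where for a real sequence $x\to0$ with nonincreasing permutation $x^*$ of $(|x_n|)$, $\|x\|_{\ell(p,q)}=(\sum_{n\ge1}(x_n^* )^q n^{q/p-1})^{1/q}$. For sequences, $x\gtrless y$ means there is $n_0\in\mathbb N$ with $x_n^*\ge y_n^*$ for $n\le n_0$ and $x_n^*\le y_n^*$ for $n>n_0$; for operators, $A\gtrless B$ means $s(A)\gtrless s(B)$. *)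

From HB Require Import structures.
From mathcomp Require Import all_boot all_order all_algebra.
From mathcomp Require Import all_classical all_reals all_analysis.
Set Implicit Arguments. Unset Strict Implicit. Unset Printing Implicit Defensive.
Import Order.TTheory GRing.Theory Num.Theory.
Local Open Scope ring_scope.
Local Open Scope classical_set_scope.

Section Defs.
Variable R : realType.

(* A sequence s : nat -> R, indexed from 1 (s 0 is ignored), is a sequence of
   singular numbers of a compact operator: s_n >= 0, nonincreasing, s_n -> 0.
   For such s, the nonincreasing rearrangement s* of |s| is s itself. *)
Definition singular_seq (s : nat -> R) : Prop :=
  (forall n, (0 < n)%N -> 0 <= s n) /\
  (forall m n, (0 < m)%N -> (m <= n)%N -> s n <= s m) /\
  (fun n => s n.+1) @ \oo --> (0 : R^o).

Definition rank_le2 (s : nat -> R) : Prop := forall n, (3 <= n)%N -> s n = 0.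

Definition lpq_sum (s : nat -> R) (p q : R) : \bar R :=
  (\sum_(1 <= n <oo) ((s n `^ q) * (n%:R `^ (q / p - 1)))%:E)%E.

Definition lpq_norm (s : nat -> R) (p q : R) : \bar R :=
  match lpq_sum s p q with
  | r%:E => ((r `^ q^-1)%:E)%E
  | _ => (+oo)%E
  end.

Definition gtrless (s t : nat -> R) : Prop :=
  exists n0 : nat, (0 < n0)%N /\
    (forall n, (0 < n)%N -> (n <= n0)%N -> t n <= s n) /\
    (forall n, (n0 < n)%N -> s n <= t n).

Definition inDelta (p0 q0 p q : R) : Prop :=
  p0 <= p /\ q0 <= q /\ q / p <= q0 / p0.

End Defs.

From HB Require Import structures.
From mathcomp Require Import all_boot all_order all_algebra.
From mathcomp Require Import all_classical all_reals all_analysis.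
From mathcomp Require Import ring lra.
Set Implicit Arguments. Unset Strict Implicit. Unset Printing Implicit Defensive.
Import Order.TTheory GRing.Theory Num.Theory.
Local Open Scope ring_scope.

(* Write s = q / q0 >= 1, u = a_n^q0, v = b_n^q0 and c = b_n0^q0, where n0 is the
   crossing index of a >< b.  On either side of n0, c lies beyond v as seen from u,
   so convexity of t |-> t^s gives u^s - v^s >= s c^(s-1) (u - v); and q/p <= q0/p0
   makes n^(q/p - q0/p0) - n0^(q/p - q0/p0) have the sign of u - v.  Hence every
   term satisfies
     t_a(p,q) - t_b(p,q) >= lambda (t_a(p0,q0) - t_b(p0,q0))
   with the single constant lambda = s c^(s-1) n0^(q/p - q0/p0) >= 0, and summing
   carries the comparison of the (p0,q0) sums over to the (p,q) sums.  Outside Delta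
   either q < q0 or q/p > q0/p0, and in each case sequences with two nonzero terms
   exploit the failure. *)

Section PowR.
Variable R : realType.
Implicit Types r s x y u v c g G : R.

Lemma ler_powR2r r x y : 0 <= r -> 0 <= x -> x <= y -> x `^ r <= y `^ r.
Proof. by move=> r_ge0 x_ge0 xy; rewrite ge0_ler_powR // nnegrE (le_trans x_ge0). Qed.

Lemma ltr_powR2r r x y : 0 < r -> 0 <= x -> x < y -> x `^ r < y `^ r.
Proof. by move=> r_gt0 x_ge0 xy; rewrite gt0_ltr_powR // nnegrE (le_trans x_ge0) ?ltW. Qed.

Lemma ler_powR2rE r x y : 0 < r -> 0 <= x -> 0 <= y -> (x `^ r <= y `^ r) = (x <= y).
Proof.
move=> r_gt0 x_ge0 y_ge0; apply/idP/idP => [|]; last exact: ler_powR2r (ltW r_gt0) x_ge0.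
by apply: contraTT; rewrite -!ltNge; exact: ltr_powR2r.
Qed.

Lemma ltr_powR2rE r x y : 0 < r -> 0 <= x -> 0 <= y -> (x `^ r < y `^ r) = (x < y).
Proof. by move=> r_gt0 x_ge0 y_ge0; rewrite !ltNge ler_powR2rE. Qed.

Lemma ler_npowR2r r x y : r <= 0 -> 0 < x -> x <= y -> y `^ r <= x `^ r.
Proof.
move=> r_le0 x_gt0 xy; have y_gt0 := lt_le_trans x_gt0 xy.
rewrite -(opprK r) (powRN y) (powRN x) lef_pV2 ?posrE ?powR_gt0 //.
by rewrite ler_powR2r ?oppr_ge0 ?(ltW x_gt0).
Qed.

Lemma powR1r r : 1 `^ r = 1.
Proof. by rewrite powR1. Qed.

Lemma gt1_ltr_powR a x y : 1 < a -> x < y -> a `^ x < a `^ y.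
Proof.
move=> a_gt1 xy; rewrite /powR gt_eqF ?(lt_trans ltr01) //.
by rewrite ltr_expR ltr_pM2r // ln_gt0.
Qed.

Lemma powRVK x r : 0 <= x -> r != 0 -> (x `^ r^-1) `^ r = x.
Proof. by move=> x_ge0 r_neq0; rewrite -powRrM mulVf // powRr1. Qed.

Lemma powR_tangent s u v : 1 <= s -> 0 <= u -> 0 <= v ->
  s * v `^ (s - 1) * (u - v) <= u `^ s - v `^ s.
Proof.
move=> s_ge1 u_ge0 v_ge0; have [->|s_neq1] := eqVneq s 1.
  by rewrite subrr powRr0 !mul1r !powRr1.
have s_gt1 : 1 < s by rewrite lt_neqAle eq_sym s_neq1.
have s_gt0 : 0 < s := lt_trans ltr01 s_gt1.
have s1_neq0 : s - 1 != 0 by rewrite subr_eq0.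
set w := v `^ (s - 1).
have young : u * w <= u `^ s / s + v `^ s / (s / (s - 1)).
  have -> : v `^ s = w `^ (s / (s - 1)).
    by rewrite -powRrM; congr (_ `^ _); field.
  apply: conjugate_powR; rewrite ?powR_ge0 ?divr_gt0 ?subr_gt0 //.
  by field; rewrite s1_neq0 gt_eqF.
have vw : v * w = v `^ s by rewrite mulr_powRB1.
have : s * (u * w) <= u `^ s + (s - 1) * (v * w).
  have -> : u `^ s + (s - 1) * (v * w) = s * (u `^ s / s + v `^ s / (s / (s - 1))).
    by rewrite vw; field; rewrite s1_neq0 gt_eqF.
  by rewrite ler_pM2l.
by rewrite -vw; lra.
Qed.

Lemma powR_exchange s u v c g G : 1 <= s -> 0 <= u -> 0 <= v -> 0 <= c -> 0 <= g ->
  (c <= v <= u) && (G <= g) || (u <= v <= c) && (g <= G) ->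
  s * c `^ (s - 1) * G * (u - v) <= (u `^ s - v `^ s) * g.
Proof.
move=> s_ge1 u_ge0 v_ge0 c_ge0 g_ge0 uvcg.
have s_ge0 : 0 <= s := le_trans ler01 s_ge1.
have s1_ge0 : 0 <= s - 1 by rewrite subr_ge0.
set K := s * c `^ (s - 1).
have K_ge0 : 0 <= K by rewrite mulr_ge0 ?powR_ge0.
have slope : K * (u - v) <= u `^ s - v `^ s.
  apply: (le_trans _ (powR_tangent s_ge1 u_ge0 v_ge0)); rewrite /K.
  case/orP: uvcg => /andP[/andP[cv vu] _].
    by rewrite ler_wpM2r ?subr_ge0 // ler_wpM2l // ler_powR2r.
  by rewrite ler_wnM2r ?subr_le0 // ler_wpM2l // ler_powR2r.
have uvgG : 0 <= (u - v) * (g - G).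
  case/orP: uvcg => /andP[/andP[uv1 uv2] gG].
    by rewrite mulr_ge0 ?subr_ge0.
  by rewrite mulr_le0 ?subr_le0.
rewrite -subr_ge0.
have -> : (u `^ s - v `^ s) * g - K * G * (u - v) =
    (u `^ s - v `^ s - K * (u - v)) * g + K * ((u - v) * (g - G)) by ring.
by apply: addr_ge0; apply: mulr_ge0; rewrite ?subr_ge0.
Qed.

End PowR.

Section LorentzSums.
Variable R : realType.
Implicit Types (x y : nat -> R) (p q : R).
Local Open Scope ereal_scope.

Definition lpq_term (x : nat -> R) (p q : R) (n : nat) : R :=
  x n `^ q * n%:R `^ (q / p - 1).

Lemma lpq_term_ge0 x p q n : (0 <= lpq_term x p q n)%R.
Proof. by rewrite mulr_ge0 ?powR_ge0. Qed.

Lemma lpq_sumE x p q : lpq_sum x p q = \sum_(1 <= n <oo) (lpq_term x p q n)%:E.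
Proof. by []. Qed.

Lemma lpq_sum_ge0 x p q : 0 <= lpq_sum x p q.
Proof. by apply: nneseries_ge0 => n _ _; rewrite lee_fin lpq_term_ge0. Qed.

Lemma lpq_sum_le_termwise x y p q : (0 <= q)%R ->
  (forall n, (0 < n)%N -> (0 <= x n <= y n)%R) -> lpq_sum x p q <= lpq_sum y p q.
Proof.
move=> q_ge0 xy; rewrite !lpq_sumE !ereal_series.
apply: lee_nneseries => [n _ _|n /= n_gt0]; first by rewrite lee_fin lpq_term_ge0.
have /andP[x_ge0 x_le_y] := xy n n_gt0.
by rewrite lee_fin ler_wpM2r ?powR_ge0 ?ler_powR2r.
Qed.

Lemma lpq_sum_lty_tail_le x y p q n0 : (0 <= q)%R ->
  (forall n, (0 < n)%N -> (0 <= x n)%R) -> (forall n, (n0 < n)%N -> (x n <= y n)%R) ->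
  lpq_sum y p q < +oo -> lpq_sum x p q < +oo.
Proof.
move=> q_ge0 x_ge0 xy_tail; have term_ge0 z k : (1 <= k)%N -> 0 <= (lpq_term z p q k)%:E.
  by rewrite lee_fin lpq_term_ge0.
rewrite !lpq_sumE (nneseries_split 1 n0 (term_ge0 x)) (nneseries_split 1 n0 (term_ge0 y)).
rewrite !sumEFin => y_fin.
apply: lte_add_pinfty; first exact: ltry.
apply: le_lt_trans y_fin.
apply: lee_paddl; first by rewrite lee_fin; apply: sumr_ge0 => k _; exact: lpq_term_ge0.
rewrite !ereal_series; apply: lee_nneseries => [k _ k_gt|k /= k_gt].
  by rewrite term_ge0 // (leq_trans _ k_gt).
by rewrite lee_fin ler_wpM2r ?powR_ge0 // ler_powR2r ?x_ge0 ?xy_tail // (leq_trans _ k_gt).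
Qed.


Lemma lpq_sum_lt_termwise x y p q k : (0 < q)%R ->
  (forall n, (0 < n)%N -> (0 <= x n <= y n)%R) -> (0 < k)%N -> (x k < y k)%R ->
  lpq_sum y p q < +oo -> lpq_sum x p q < lpq_sum y p q.
Proof.
move=> q_gt0 xy k_gt0 xk_lt_yk y_fin.
pose d n := (lpq_term y p q n - lpq_term x p q n)%R.
have d_ge0 n : (1 <= n)%N -> 0 <= (d n)%:E.
  move=> n_gt0; have /andP[x_ge0 x_le_y] := xy n n_gt0.
  by rewrite lee_fin subr_ge0 ler_wpM2r ?powR_ge0 // ler_powR2r ?(ltW q_gt0).
have y_split : lpq_sum y p q = lpq_sum x p q + \sum_(1 <= n <oo) (d n)%:E.
  rewrite !lpq_sumE -nneseriesD => [|n n_gt0 _|n n_gt0 _]; last 2 first.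
  - by rewrite lee_fin lpq_term_ge0.
  - exact: d_ge0.
  by apply: eq_eseriesr => n _; rewrite -EFinD /d addrC subrK.
have x_fin : lpq_sum x p q \is a fin_num.
  rewrite ge0_fin_numE ?lpq_sum_ge0 //; apply: le_lt_trans y_fin.
  by rewrite y_split; apply: lee_paddr (lexx _); apply: nneseries_ge0 => n n_gt0 _; exact: d_ge0.
have dk_le : (d k)%:E <= \sum_(1 <= n <oo) (d n)%:E.
  apply: le_trans (nneseries_lim_ge k.+1 (fun n n_gt0 _ => d_ge0 n n_gt0)).
  rewrite sumEFin lee_fin big_nat_recr //= lerDr.
  by rewrite big_nat sumr_ge0 // => n /andP[n_gt0 _]; rewrite -lee_fin d_ge0.
rewrite y_split lteDl //; apply: lt_le_trans dk_le.
by rewrite lte_fin subr_gt0 ltr_pM2r ?powR_gt0 ?ltr0n ?ltr_powR2r //; have /andP[] := xy k k_gt0.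
Qed.

Lemma lpq_norm_leE x y p q : (0 < q)%R ->
  (lpq_norm x p q <= lpq_norm y p q) = (lpq_sum x p q <= lpq_sum y p q).
Proof.
move=> q_gt0; rewrite /lpq_norm; move: (lpq_sum_ge0 x p q) (lpq_sum_ge0 y p q).
case: (lpq_sum x p q) => [r| |]; case: (lpq_sum y p q) => [t| |] // r_ge0 t_ge0.
- by rewrite !lee_fin ler_powR2rE ?invr_gt0 // powR_ge0.
- by rewrite !leey.
Qed.

Lemma lpq_norm_ltE x y p q : (0 < q)%R ->
  (lpq_norm x p q < lpq_norm y p q) = (lpq_sum x p q < lpq_sum y p q).
Proof. by move=> q_gt0; rewrite !ltNge lpq_norm_leE. Qed.

Lemma lpq_norm_lty x p q : (lpq_norm x p q < +oo) = (lpq_sum x p q < +oo).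
Proof.
rewrite /lpq_norm; move: (lpq_sum_ge0 x p q).
by case: (lpq_sum x p q) => [r| |] //; rewrite !ltry.
Qed.

End LorentzSums.

Section ExtendedExchange.
Variable R : realType.
Local Open Scope ereal_scope.

Lemma lee_exchange (x y x0 y0 : \bar R) (l : R) : (0 <= l)%R -> 0 <= y0 -> y0 <= x0 ->
  x0 < +oo -> y + l%:E * x0 <= x + l%:E * y0 -> y <= x.
Proof.
move=> l_ge0 y0_ge0 y0_le_x0 x0_fin exch.
have lx0_fin : l%:E * x0 \is a fin_num.
  by rewrite fin_numM // ge0_fin_numE // (le_trans y0_ge0).
rewrite -(leeD2rE _ _ lx0_fin); apply: le_trans exch _.
by rewrite leeD2l // lee_wpmul2l ?lee_fin.
Qed.

Lemma lte_exchange (x y x0 y0 : \bar R) (l : R) : (0 < l)%R -> 0 <= y0 -> y0 < x0 ->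
  x0 < +oo -> 0 <= x -> x < +oo -> y + l%:E * x0 <= x + l%:E * y0 -> y < x.
Proof.
move=> l_gt0 y0_ge0 y0_lt_x0 x0_fin x_ge0 x_fin exch.
have x0_num : x0 \is a fin_num by rewrite ge0_fin_numE // (le_trans y0_ge0) ?ltW.
have y0_num : y0 \is a fin_num by rewrite ge0_fin_numE // (lt_trans y0_lt_x0).
have x_num : x \is a fin_num by rewrite ge0_fin_numE.
have lx0_num : l%:E * x0 \is a fin_num by rewrite fin_numM.
rewrite -(lteD2rE _ _ lx0_num); apply: le_lt_trans exch _.
by rewrite lteD2lE // lte_pmul2l.
Qed.

End ExtendedExchange.

Section Exchange.
Variable R : realType.

Lemma inDelta_q_gt0 (p0 q0 p q : R) : 0 < q0 -> inDelta p0 q0 p q -> 0 < q.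
Proof. by move=> q0_gt0 [_ [q0_le_q _]]; exact: lt_le_trans q0_le_q. Qed.

Definition exchange_coef (b : nat -> R) (p0 q0 p q : R) (n0 : nat) : R :=
  q / q0 * (b n0 `^ q0) `^ (q / q0 - 1) * n0%:R `^ (q / p - q0 / p0).

Variables (p0 q0 p q : R) (a b : nat -> R) (n0 : nat).
Hypotheses (q0_gt0 : 0 < q0) (Delta_pq : inDelta p0 q0 p q) (n0_gt0 : (0 < n0)%N).
Hypotheses (a_ge0 : forall n, (0 < n)%N -> 0 <= a n)
  (b_ge0 : forall n, (0 < n)%N -> 0 <= b n)
  (b_noninc : forall m n, (0 < m)%N -> (m <= n)%N -> b n <= b m)
  (ba_head : forall n, (0 < n)%N -> (n <= n0)%N -> b n <= a n)
  (ab_tail : forall n, (n0 < n)%N -> a n <= b n).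

Let q_gt0 : 0 < q := inDelta_q_gt0 q0_gt0 Delta_pq.

Lemma exchange_coef_ge0 : 0 <= exchange_coef b p0 q0 p q n0.
Proof. by rewrite !mulr_ge0 ?powR_ge0 ?invr_ge0 ?(ltW q_gt0) ?(ltW q0_gt0). Qed.

Lemma exchange_coef_gt0 : 0 < b n0 -> 0 < exchange_coef b p0 q0 p q n0.
Proof. by move=> bn0_gt0; rewrite !mulr_gt0 ?powR_gt0 ?invr_gt0 ?ltr0n. Qed.

Lemma lpq_term_exchange n : (0 < n)%N ->
  lpq_term b p q n + exchange_coef b p0 q0 p q n0 * lpq_term a p0 q0 n <=
  lpq_term a p q n + exchange_coef b p0 q0 p q n0 * lpq_term b p0 q0 n.
Proof.
move=> n_gt0; have [_ [q0_le_q ratio_le]] := Delta_pq.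
set s := q / q0; set e := q / p - q0 / p0.
have s_ge1 : 1 <= s by rewrite /s ler_pdivlMr // mul1r.
have e_le0 : e <= 0 by rewrite /e subr_le0.
have pow_q z : z `^ q = (z `^ q0) `^ s by rewrite -powRrM mulrC divfK ?gt_eqF.
have weight : n%:R `^ (q / p - 1) = n%:R `^ (q0 / p0 - 1) * n%:R `^ e.
  rewrite -powRD; last by rewrite pnatr_eq0 -lt0n n_gt0 implybT.
  by congr (_ `^ _); rewrite /e; ring.
rewrite /lpq_term /exchange_coef !pow_q weight -/s -/e.
set u := a n `^ q0; set v := b n `^ q0; set c := b n0 `^ q0.
set w := n%:R `^ (q0 / p0 - 1); set g := n%:R `^ e; set G := n0%:R `^ e.
have ler_q0 x y : 0 <= x -> x <= y -> x `^ q0 <= y `^ q0 by apply: ler_powR2r; exact: ltW.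
have uvcgG : (c <= v <= u) && (G <= g) || (u <= v <= c) && (g <= G).
  have [n_le_n0|n0_lt_n] := leqP n n0; apply/orP; [left | right].
  - rewrite !ler_q0 ?b_ge0 ?b_noninc ?ba_head //.
    by rewrite ler_npowR2r ?ltr0n ?ler_nat.
  - rewrite !ler_q0 ?a_ge0 ?b_ge0 ?ab_tail ?b_noninc ?(ltnW n0_lt_n) //.
    by rewrite ler_npowR2r ?ltr0n ?ler_nat ?(ltnW n0_lt_n).
have exch : s * c `^ (s - 1) * G * (u - v) <= (u `^ s - v `^ s) * g.
  by apply: powR_exchange; rewrite ?powR_ge0.
have w_ge0 : 0 <= w by exact: powR_ge0.
move: exch; move: (u `^ s) (v `^ s) => us vs exch; clearbody u v c w g G.
rewrite -subr_ge0.
have -> : us * (w * g) + s * c `^ (s - 1) * G * (v * w) -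
    (vs * (w * g) + s * c `^ (s - 1) * G * (u * w)) =
    w * ((us - vs) * g - s * c `^ (s - 1) * G * (u - v)) by ring.
by rewrite mulr_ge0 // subr_ge0.
Qed.

Lemma lpq_sum_exchange :
  (lpq_sum b p q + (exchange_coef b p0 q0 p q n0)%:E * lpq_sum a p0 q0 <=
   lpq_sum a p q + (exchange_coef b p0 q0 p q n0)%:E * lpq_sum b p0 q0)%E.
Proof.
have term_ge0 x p' q' n : (0 <= (lpq_term x p' q' n)%:E)%E by rewrite lee_fin lpq_term_ge0.
have lam_term_ge0 x p' q' n : (0 <= (exchange_coef b p0 q0 p q n0)%:E * (lpq_term x p' q' n)%:E)%E.
  by rewrite mule_ge0 // lee_fin exchange_coef_ge0.
rewrite !lpq_sumE !ereal_series -!nneseriesZl; try by move=> *; exact: term_ge0.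
rewrite -!nneseriesD; try by move=> *; rewrite ?term_ge0 ?lam_term_ge0.
apply: lee_nneseries => [n _ _|n /= n_gt0]; first by rewrite adde_ge0.
by rewrite -!EFinM -!EFinD lee_fin lpq_term_exchange.
Qed.

End Exchange.

Section TwoTermSequences.
Variable R : realType.
Implicit Types (p q : R).

Definition seq2 (x1 x2 : R) : nat -> R :=
  fun n => if n == 1%N then x1 else if n == 2%N then x2 else 0.

Lemma seq2_singular (x1 x2 : R) : 0 <= x2 <= x1 -> singular_seq (seq2 x1 x2).
Proof.
case/andP=> x2_ge0 x2_le_x1; have x1_ge0 := le_trans x2_ge0 x2_le_x1.
split; [|split].
- by move=> [|[|[|n]]].
- by move=> [|[|[|m]]] [|[|[|n]]].
- apply: (cvg_near_cst (0 : R^o)); exists 2%N => // n /= n_ge2.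
  by rewrite /seq2 /= !eqSS; case: n n_ge2 => [|[|n]].
Qed.

Lemma seq2_rank_le2 (x1 x2 : R) : rank_le2 (seq2 x1 x2).
Proof. by move=> [|[|[|n]]]. Qed.

Lemma seq2_gtrless (x1 x2 y1 y2 : R) : y1 <= x1 -> x2 <= y2 -> gtrless (seq2 x1 x2) (seq2 y1 y2).
Proof.
by move=> y1_le_x1 x2_le_y2; exists 1%N; split=> //; split=> [[|[|n]]|[|[|[|n]]]].
Qed.

Lemma lpq_sum_seq2 (x1 x2 : R) p q : 0 < q ->
  lpq_sum (seq2 x1 x2) p q = (x1 `^ q + x2 `^ q * 2 `^ (q / p - 1))%:E.
Proof.
move=> q_gt0; rewrite lpq_sumE (nneseries_split 1 2); last first.
  by move=> n _; rewrite lee_fin lpq_term_ge0.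
rewrite eseries0 ?adde0 => [|[|[|[|n]]] //= _ _]; last first.
  by rewrite /lpq_term /seq2 powR0 ?gt_eqF ?mul0r.
by rewrite sumEFin big_nat_recr //= big_nat1 /lpq_term /seq2 /= powR1 mulr1.
Qed.

Lemma lpq_norm_seq2 (x1 x2 : R) p q : 0 < q ->
  lpq_norm (seq2 x1 x2) p q = ((x1 `^ q + x2 `^ q * 2 `^ (q / p - 1)) `^ q^-1)%:E.
Proof. by move=> q_gt0; rewrite /lpq_norm lpq_sum_seq2. Qed.

End TwoTermSequences.

Section Monotonicity.
Variable R : realType.
Variables (p0 q0 p q : R).
Hypotheses (q0_gt0 : 0 < q0) (Delta_pq : inDelta p0 q0 p q).

Let q_gt0 : 0 < q := inDelta_q_gt0 q0_gt0 Delta_pq.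

(* Compare x with its first term alone, which crosses x at n0 = 1. *)
Lemma lpq_sum_lty_Delta (x : nat -> R) : singular_seq x ->
  (lpq_sum x p0 q0 < +oo)%E -> (lpq_sum x p q < +oo)%E.
Proof.
move=> [x_ge0 [x_noninc _]] x0_fin; set a := seq2 (x 1%N) 0.
have a_ge0 n : (0 < n)%N -> 0 <= a n by move: n => [|[|[|n]]] // _; exact: x_ge0.
have xa_head n : (0 < n)%N -> (n <= 1)%N -> x n <= a n by move: n => [|[|n]].
have ax_tail n : (1 < n)%N -> a n <= x n by move: n => [|[|[|n]]] // _; exact: x_ge0.
have exch := @lpq_sum_exchange R p0 q0 p q a x 1 q0_gt0 Delta_pq isT
  a_ge0 x_ge0 x_noninc xa_head ax_tail.
have x0_num : lpq_sum x p0 q0 \is a fin_num by rewrite ge0_fin_numE ?lpq_sum_ge0.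
apply: le_lt_trans (lee_paddr _ (lexx _)) (le_lt_trans exch _).
  by rewrite mule_ge0 ?lpq_sum_ge0 // lee_fin exchange_coef_ge0.
by rewrite lpq_sum_seq2 // -(fineK x0_num) -EFinM -EFinD ltry.
Qed.

Variables (a b : nat -> R).
Hypotheses (a_sing : singular_seq a) (b_sing : singular_seq b) (ab_cross : gtrless a b).

Lemma lpq_norm_le_Delta : (lpq_norm a p0 q0 < +oo)%E ->
  (lpq_norm b p0 q0 <= lpq_norm a p0 q0)%E -> (lpq_norm b p q <= lpq_norm a p q)%E.
Proof.
have [[a_ge0 _] [b_ge0 [b_noninc _]]] := (a_sing, b_sing).
have [n0 [n0_gt0 [ba_head ab_tail]]] := ab_cross.
rewrite lpq_norm_lty !lpq_norm_leE // => a0_fin b0_le_a0.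
apply: lee_exchange (lpq_sum_ge0 _ _ _) b0_le_a0 a0_fin
  (lpq_sum_exchange q0_gt0 Delta_pq n0_gt0 a_ge0 b_ge0 b_noninc ba_head ab_tail).
exact: exchange_coef_ge0.
Qed.

Lemma lpq_norm_lt_Delta : (lpq_norm b p0 q0 < lpq_norm a p0 q0)%E ->
  (lpq_norm b p q < lpq_norm a p q)%E.
Proof.
have [[a_ge0 _] [b_ge0 [b_noninc _]]] := (a_sing, b_sing).
have [n0 [n0_gt0 [ba_head ab_tail]]] := ab_cross.
rewrite !lpq_norm_ltE // => b0_lt_a0.
have a0_fin : (lpq_sum a p0 q0 < +oo)%E.
  apply: lpq_sum_lty_tail_le (ltW q0_gt0) a_ge0 ab_tail _.
  exact: lt_le_trans b0_lt_a0 (leey _).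
have a_fin := lpq_sum_lty_Delta a_sing a0_fin.
have := b_ge0 n0 n0_gt0; rewrite le_eqVlt => /predU1P[bn0_eq0|bn0_gt0]; last first.
  apply: lte_exchange (lpq_sum_ge0 _ _ _) b0_lt_a0 a0_fin (lpq_sum_ge0 _ _ _) a_fin
    (lpq_sum_exchange q0_gt0 Delta_pq n0_gt0 a_ge0 b_ge0 b_noninc ba_head ab_tail).
  exact: exchange_coef_gt0.
(* b n0 = 0, where the exchange coefficient may vanish; then b <= a termwise *)
have b_le_a n : (0 < n)%N -> 0 <= b n <= a n.
  move=> n_gt0; rewrite b_ge0 //=; have [n_le_n0|n0_lt_n] := leqP n n0; first exact: ba_head.
  by rewrite (le_trans (b_noninc _ _ n0_gt0 (ltnW n0_lt_n))) // -bn0_eq0 a_ge0.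
have [k k_gt0 bk_lt_ak] : exists2 k, (0 < k)%N & b k < a k.
  apply: contrapT => no_k; move: b0_lt_a0; rewrite ltNge => /negP; apply.
  apply: lpq_sum_le_termwise (ltW q0_gt0) _ => n n_gt0.
  by rewrite a_ge0 //= leNgt; apply/negP => bn_lt_an; apply: no_k; exists n.
exact: lpq_sum_lt_termwise q_gt0 b_le_a k_gt0 bk_lt_ak a_fin.
Qed.

End Monotonicity.

Section Counterexamples.
Variable R : realType.
Variables (p0 q0 p q : R).

Definition rank2_counterexample : Prop :=
  exists a b : nat -> R,
    [/\ singular_seq a /\ singular_seq b, rank_le2 a /\ rank_le2 b, gtrless a b,
        (lpq_norm b p0 q0 < lpq_norm a p0 q0)%E & (lpq_norm a p q < lpq_norm b p q)%E].

Lemma seq2_counterexample (x1 x2 y1 y2 : R) : 0 < q0 -> 0 < q ->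
  0 <= x2 <= x1 -> 0 <= y2 <= y1 -> y1 <= x1 -> x2 <= y2 ->
  y1 `^ q0 + y2 `^ q0 * 2 `^ (q0 / p0 - 1) < x1 `^ q0 + x2 `^ q0 * 2 `^ (q0 / p0 - 1) ->
  x1 `^ q + x2 `^ q * 2 `^ (q / p - 1) < y1 `^ q + y2 `^ q * 2 `^ (q / p - 1) ->
  rank2_counterexample.
Proof.
move=> q0_gt0 q_gt0 x_sorted y_sorted y1_le_x1 x2_le_y2 lt0 lt.
exists (seq2 x1 x2), (seq2 y1 y2); split.
- by split; apply: seq2_singular.
- by split; apply: seq2_rank_le2.
- exact: seq2_gtrless.
- by rewrite !lpq_norm_seq2 // lte_fin ltr_powR2r ?invr_gt0 ?addr_ge0 ?mulr_ge0 ?powR_ge0.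
- by rewrite !lpq_norm_seq2 // lte_fin ltr_powR2r ?invr_gt0 ?addr_ge0 ?mulr_ge0 ?powR_ge0.
Qed.

Lemma not_inDelta : 0 < p0 -> 0 < q0 -> 0 < p -> ~ inDelta p0 q0 p q ->
  q < q0 \/ q0 <= q /\ q0 / p0 < q / p.
Proof.
move=> p0_gt0 q0_gt0 p_gt0 not_Delta.
have [q_lt_q0|q0_le_q] := ltP q q0; [by left | right; split => //].
rewrite ltNge; apply/negP => ratio_le; apply: not_Delta; split; last by split.
have : q0 / p <= q0 / p0 by apply: le_trans ratio_le; rewrite ler_pM2r ?invr_gt0.
by rewrite ler_pM2l // lef_pV2 ?posrE.
Qed.

(* For a = (x, 0) and b = (1, c): take x^r = 1 + k c^r / 2; raising to the power
   r0 > r makes x^r0 - 1 beat k0 c^r0 once c is small enough. *)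
Lemma q_lt_witness (k0 k r r0 : R) : 0 < k0 -> 0 < k -> 0 < r -> r < r0 ->
  exists c x : R, [/\ 0 < c <= 1, 1 <= x,
    1 + c `^ r0 * k0 < x `^ r0 & x `^ r < 1 + c `^ r * k].
Proof.
move=> k0_gt0 k_gt0 r_gt0 r_lt_r0; have r0_gt0 := lt_trans r_gt0 r_lt_r0.
have rr_gt0 : 0 < r0 - r by rewrite subr_gt0.
pose c := Num.min 1 ((k / (4 * k0)) `^ (r0 - r)^-1).
have c_gt0 : 0 < c by rewrite lt_min ltr01 powR_gt0 // divr_gt0 ?mulr_gt0.
have c_small : c `^ (r0 - r) <= k / (4 * k0).
  have t_ge0 : 0 <= k / (4 * k0) by rewrite divr_ge0 ?mulr_ge0 ?(ltW k0_gt0) ?(ltW k_gt0).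
  rewrite -[X in _ <= X](powRVK t_ge0 (lt0r_neq0 rr_gt0)).
  by rewrite ler_powR2r ?(ltW rr_gt0) ?(ltW c_gt0) // ge_min lexx orbT.
pose m := k * c `^ r / 2.
have m_gt0 : 0 < m by rewrite divr_gt0 ?mulr_gt0 ?powR_gt0.
pose x := (1 + m) `^ r^-1.
have x_r : x `^ r = 1 + m by rewrite powRVK ?gt_eqF ?addr_ge0 ?(ltW m_gt0).
exists c, x; split.
- by rewrite c_gt0 ge_min lexx.
- by rewrite -(powRr0 (1 + m)) ler_powR ?invr_ge0 ?(ltW r_gt0) // lerDl (ltW m_gt0).
- have x_r0 : 1 + m <= x `^ r0.
    have -> : x `^ r0 = (x `^ r) `^ (r0 / r).
      by rewrite -powRrM mulrCA divff ?mulr1 ?gt_eqF.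
    by rewrite x_r le1r_powR ?lerDl ?(ltW m_gt0) // ler_pdivlMr // mul1r (ltW r_lt_r0).
  have c_r0 : c `^ r0 * k0 <= k * c `^ r / 4.
    have -> : c `^ r0 = c `^ r * c `^ (r0 - r).
      by rewrite -powRD ?subrKC // gt_eqF ?implybT.
    apply: (@le_trans _ _ (c `^ r * (k / (4 * k0)) * k0)).
      by rewrite ler_wpM2r ?(ltW k0_gt0) // ler_wpM2l ?powR_ge0.
    by rewrite le_eqVlt; apply/orP; left; apply/eqP; field; rewrite gt_eqF.
  apply: (lt_le_trans _ x_r0); rewrite ltrD2l; apply: le_lt_trans c_r0 _.
  by rewrite /m ltr_pM2l ?mulr_gt0 ?powR_gt0 // ltf_pV2 ?posrE // ltr_nat.
- rewrite x_r ltrD2l /m [c `^ r * k]mulrC ltr_pdivrMr //.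
  by rewrite ltr_pMr ?mulr_gt0 ?powR_gt0 // ltr1n.
Qed.

Lemma rank2_counterexample_q_lt : 0 < q -> q < q0 -> rank2_counterexample.
Proof.
move=> q_gt0 q_lt_q0; have q0_gt0 := lt_trans q_gt0 q_lt_q0.
have k0_gt0 : 0 < 2 `^ (q0 / p0 - 1) :> R by rewrite powR_gt0.
have k_gt0 : 0 < 2 `^ (q / p - 1) :> R by rewrite powR_gt0.
have [c [x [/andP[c_gt0 c_le1] x_ge1 lt0 lt]]] := q_lt_witness k0_gt0 k_gt0 q_gt0 q_lt_q0.
apply: (@seq2_counterexample x 0 1 c) => //.
- by rewrite lexx (le_trans ler01).
- by rewrite ltW.
- exact: ltW.
- by rewrite powR1r powR0 ?gt_eqF // mul0r addr0.
by rewrite powR1r powR0 ?gt_eqF // mul0r addr0.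
Qed.

(* For a = (1, c) and b = (T, T) in q0-th powers: 1 - T = mu (T - c) with
   k0 < mu < k c^(s-1), and the tangent lines of t |-> t^s at 1 and at c compare
   the (p, q) sums. *)
Lemma ratio_gt_witness (k0 k s : R) : 0 < k0 -> k0 < k -> 1 <= s ->
  exists c T : R, [/\ 0 < c, c <= T, T <= 1,
    T + T * k0 < 1 + c * k0 & 1 + c `^ s * k < T `^ s + T `^ s * k].
Proof.
move=> k0_gt0 k0_lt_k s_ge1; have k_gt0 := lt_trans k0_gt0 k0_lt_k.
have s_gt0 : 0 < s := lt_le_trans ltr01 s_ge1.
pose rho := k0 / k.
have rho_gt0 : 0 < rho by rewrite divr_gt0.
have rho_lt1 : rho < 1 by rewrite ltr_pdivrMr // mul1r.
pose c := ((1 + rho) / 2) `^ s^-1.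
have c_s : c `^ s = (1 + rho) / 2 by rewrite powRVK ?gt_eqF ?divr_ge0 ?addr_ge0 ?(ltW rho_gt0).
have c_gt0 : 0 < c by rewrite powR_gt0 // divr_gt0 ?addr_gt0.
have c_lt1 : c < 1.
  by rewrite -(ltr_powR2rE s_gt0) ?(ltW c_gt0) // c_s powR1r ltr_pdivrMr // mul1r; lra.
pose P := c `^ (s - 1).
have k0_lt_kP : k0 < k * P.
  have c_s_le_P : c `^ s <= P by rewrite ger_powR ?c_gt0 ?(ltW c_lt1) // lerBlDr lerDl.
  apply: lt_le_trans (ler_wpM2l (ltW k_gt0) c_s_le_P); rewrite c_s.
  have -> : k * ((1 + rho) / 2) = (k + k0) / 2 by rewrite /rho; field; rewrite gt_eqF.
  lra.
pose mu := (k0 + k * P) / 2.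
have mu_gt_k0 : k0 < mu by rewrite /mu; lra.
have mu_lt_kP : mu < k * P by rewrite /mu; lra.
have mu_gt0 : 0 < mu := lt_trans k0_gt0 mu_gt_k0.
pose d := (1 - c) / (1 + mu).
have d_gt0 : 0 < d by rewrite divr_gt0 ?subr_gt0 ?addr_gt0.
pose T := c + d.
have T_eq : T = 1 - mu * d by rewrite /T /d; field; rewrite gt_eqF ?addr_gt0.
have T_gt0 : 0 < T by rewrite addr_gt0.
exists c, T; split=> //.
- by rewrite lerDl ltW.
- by rewrite T_eq gerBl mulr_ge0 ?ltW.
- have : 0 < d * (mu - k0) by rewrite mulr_gt0 ?subr_gt0.
  by rewrite mulrBr {1}T_eq /T; lra.
have at1 := powR_tangent s_ge1 (ltW T_gt0) ler01.
have atc := powR_tangent s_ge1 (ltW T_gt0) (ltW c_gt0).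
rewrite !powR1r mulr1 -/P (_ : T - 1 = - (mu * d)) in at1 atc; last by rewrite T_eq; ring.
rewrite (_ : T - c = d) in atc; last by rewrite /T; ring.
have slope : 0 < s * d * (k * P - mu).
  by apply: mulr_gt0; [exact: mulr_gt0 | rewrite subr_gt0].
have katc : k * (s * P * d) <= k * (T `^ s - c `^ s) by rewrite ler_pM2l.
move: (T `^ s) (c `^ s) at1 atc slope katc => Ts cs at1 atc slope katc.
rewrite -subr_gt0.
have -> : Ts + Ts * k - (1 + cs * k) =
  (Ts - 1 + s * (mu * d)) + (k * (Ts - cs) - k * (s * P * d)) + s * d * (k * P - mu) by ring.
lra.
Qed.

Lemma rank2_counterexample_ratio_gt :
  0 < q0 -> q0 <= q -> q0 / p0 < q / p -> rank2_counterexample.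
Proof.
move=> q0_gt0 q0_le_q ratio_lt; have q_gt0 := lt_le_trans q0_gt0 q0_le_q.
have k0_gt0 : 0 < 2 `^ (q0 / p0 - 1) by rewrite powR_gt0.
have k0_lt_k : 2 `^ (q0 / p0 - 1) < 2 `^ (q / p - 1) :> R.
  by rewrite gt1_ltr_powR ?ltr1n // ltrD2r.
have s_ge1 : 1 <= q / q0 by rewrite ler_pdivlMr // mul1r.
have [c [T [c_gt0 c_le_T T_le1 lt0 lt]]] := ratio_gt_witness k0_gt0 k0_lt_k s_ge1.
have q0V_gt0 : 0 < q0^-1 by rewrite invr_gt0.
have T_ge0 : 0 <= T := le_trans (ltW c_gt0) c_le_T.
have root_le1 x : 0 <= x -> x <= 1 -> x `^ q0^-1 <= 1.
  by move=> x_ge0 x_le1; rewrite -(powR1r q0^-1) ler_powR2r ?(ltW q0V_gt0).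
apply: (@seq2_counterexample 1 (c `^ q0^-1) (T `^ q0^-1) (T `^ q0^-1)) => //.
- by rewrite powR_ge0 root_le1 ?(ltW c_gt0) ?(le_trans c_le_T).
- by rewrite powR_ge0 lexx.
- exact: root_le1.
- by rewrite ler_powR2r ?(ltW q0V_gt0) ?(ltW c_gt0).
- by rewrite powR1r !powRVK ?gt_eqF ?(ltW c_gt0).
have root_pow x : (x `^ q0^-1) `^ q = x `^ (q / q0) by rewrite -powRrM mulrC.
by rewrite powR1r !root_pow.
Qed.

End Counterexamples.

Theorem mainTheorem12 (R : realType) (p0 q0 : R) (hp0 : 0 < p0) (hq0 : 0 < q0) :
  (forall (a b : nat -> R), singular_seq a -> singular_seq b -> gtrless a b ->
     forall p q : R, inDelta p0 q0 p q ->
       ((lpq_norm a p0 q0 < +oo)%E ->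
          (lpq_norm b p0 q0 <= lpq_norm a p0 q0)%E ->
          (lpq_norm b p q <= lpq_norm a p q)%E) /\
       ((lpq_norm b p0 q0 < lpq_norm a p0 q0)%E ->
          (lpq_norm b p q < lpq_norm a p q)%E)) /\
  (forall p q : R, 0 < p -> 0 < q -> ~ inDelta p0 q0 p q ->
     exists a b : nat -> R,
       [/\ singular_seq a /\ singular_seq b, rank_le2 a /\ rank_le2 b,
           gtrless a b,
           (lpq_norm b p0 q0 < lpq_norm a p0 q0)%E &
           (lpq_norm a p q < lpq_norm b p q)%E]).
Proof.
split=> [a b a_sing b_sing ab_cross p q Delta_pq | p q p_gt0 q_gt0 not_Delta].
  split; [exact: lpq_norm_le_Delta | exact: lpq_norm_lt_Delta].
have [q_lt_q0 | [q0_le_q ratio_lt]] := not_inDelta hp0 hq0 p_gt0 not_Delta.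
  exact: rank2_counterexample_q_lt.
exact: rank2_counterexample_ratio_gt.
Qed.
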